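(* For any integers $k,s\geq 2$ and any reals $K,\varepsilon>0$ there exists a constant $C=C(k,s,K,\varepsilon)>0$ such that the following holds. Let $G$ be a graph on $n$ vertices which contains no copy of $K_{s,s}$ as a subgraph, and let $V(G)=A\cup B$ be a partition with at least $e(A,B)\geq Cn^{1+1/k}$ crossing edges. Assume that the graph $G_1$ on $V(G)$ whose edges are the crossing edges (the edges of $G$ between $A$ and $B$) is $K$-almost-regular. Then at least a $(1-\varepsilon)$-fraction of the alternating paths of length $k$ in $G$ are induced subgraphs of $G$.
   Context: A graph is $K$-almost-regular if its maximum degree is at most $K$ times its minimum degree. An alternating path of length $k$ is a path in $G$ with $k$ edges (on $k+1$ distinct vertices) all of whose edges have one endpoint in $A$ and the other in $B$. Such a path is induced if $G$ has no edges between its vertices other than the path edges. *)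

From HB Require Import structures.
From mathcomp Require Import all_boot all_order all_algebra.
From mathcomp Require Import all_classical all_reals exp.
Set Implicit Arguments. Unset Strict Implicit. Unset Printing Implicit Defensive.
Import Order.TTheory GRing.Theory Num.Theory.

(* A simple graph on a finite vertex type T is a symmetric irreflexive
   relation e : rel T.  The partition V(G) = A ∪ B is given by A and B := ~: A. *)

Section Defs.
Variables (T : finType) (e : rel T) (A : {set T}).

Definition crossing (x y : T) : bool := e x y && ((x \in A) != (y \in A)).

(* e(A,B): number of edges with one endpoint in A and the other in B = ~: A;
   each edge is counted once, via its orientation from A to B *)
Definition cross_edges : nat :=
  #|[set p : T * T | e p.1 p.2 && (p.1 \in A) && (p.2 \notin A)]|.

Definition deg1 (v : T) : nat := #|[set u | crossing v u]|.

Definition almost_regular (R : numDomainType) (K : R) : Prop :=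
  forall u v : T, ((deg1 u)%:R <= K * (deg1 v)%:R)%R.

Definition Kss_free (s : nat) : Prop :=
  ~ exists X Y : {set T},
      [/\ #|X| = s, #|Y| = s, [disjoint X & Y] &
          forall x y, x \in X -> y \in Y -> e x y].

Definition alt_path (k : nat) (p : {ffun 'I_k.+1 -> T}) : bool :=
  injectiveb p &&
  [forall i : 'I_k, crossing (p (inord i)) (p (inord i.+1))].

Definition induced_path (k : nat) (p : {ffun 'I_k.+1 -> T}) : bool :=
  [forall i : 'I_k.+1, forall j : 'I_k.+1,
     e (p i) (p j) ==> ((i : nat).+1 == j) || ((j : nat).+1 == i)].

Definition alt_paths (k : nat) : {set {ffun 'I_k.+1 -> T}} :=
  [set p | alt_path p].

Definition induced_alt_paths (k : nat) : {set {ffun 'I_k.+1 -> T}} :=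
  [set p | alt_path p && induced_path p].

End Defs.

From HB Require Import structures.
From mathcomp Require Import all_boot all_order all_algebra.
From mathcomp Require Import all_classical all_reals exp.
From mathcomp Require Import zify ring lra.
Import Order.TTheory GRing.Theory Num.Theory.
Set Implicit Arguments. Unset Strict Implicit. Unset Printing Implicit Defensive.

(* An alternating path of length k is an injective walk in the graph G_1 of
   crossing edges, so if d is the minimum degree of G_1 there are at least
   n (d - k)^k of them.  A non-induced one has a chord p_i p_j with j >= i + 2;
   once p_(i+1) and p_(j-1) are fixed, the chord is an edge of G between two
   G_1-neighbourhoods, each of size at most D = K d.  Double counting stars as
   in the Kővári–Sós–Turán theorem shows that a K_(s,s)-free graph has at most
   D^2 / Q edges between two sets of size at most D once D is large in terms of
   Q and s.  Hence at most (k+1)^2 n D^(k-2) D^2 / Q paths are not induced,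
   an eps-fraction for Q >= (k+1)^2 (2K)^k / eps. *)

Lemma sum_bool_card (I : finType) (P : pred I) :
  \sum_i (P i : nat) = #|[set i | P i]|.
Proof.
rewrite -sum1dep_card [RHS]big_mkcond /=.
by apply: eq_bigr => i _; case: (P i).
Qed.

Section AllSeqs.
Variable T : finType.

Fixpoint all_seqs (n : nat) : seq (seq T) :=
  if n is n'.+1 then [seq x :: s | x <- enum T, s <- all_seqs n'] else [:: [::]].

Lemma mem_all_seqs n s : (s \in all_seqs n) = (size s == n).
Proof.
elim: n s => [|n IHn] s; first by case: s.
apply/allpairsP/idP => [[[x t] /= [_ t_n ->]]|]; first by rewrite /= eqSS -IHn.
case: s => [//|x s] /=; rewrite eqSS -IHn => s_n.
by exists (x, s); rewrite mem_enum.
Qed.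

Lemma uniq_all_seqs n : uniq (all_seqs n).
Proof.
elim: n => [//|n IHn] /=.
apply: allpairs_uniq_dep => //; first exact: enum_uniq.
by move=> [x s] [y t] _ _ /= [-> ->].
Qed.

Lemma big_all_seqs0 (F : seq T -> nat) : \sum_(s <- all_seqs 0) F s = F [::].
Proof. exact: big_seq1. Qed.

Lemma big_all_seqsS (F : seq T -> nat) n :
  \sum_(s <- all_seqs n.+1) F s = \sum_x \sum_(s <- all_seqs n) F (x :: s).
Proof. by rewrite /= big_allpairs_dep /= big_enum. Qed.

Lemma big_all_seqsD a b (F : seq T -> nat) :
  \sum_(s <- all_seqs (a + b)) F s =
  \sum_(s <- all_seqs a) \sum_(t <- all_seqs b) F (s ++ t).
Proof.
elim: a F => [|a IHa] F; first by rewrite big_all_seqs0.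
by rewrite addSn !big_all_seqsS; apply: eq_bigr => x _; rewrite IHa.
Qed.

Lemma nth_codom_ord (x0 : T) n (p : {ffun 'I_n -> T}) (i : 'I_n) :
  nth x0 (codom p) i = p i.
Proof.
rewrite codomE (nth_map i) ?size_enum_ord //.
by rewrite nth_ord_enum.
Qed.

Lemma sum_ffun_codom (x0 : T) n (F : seq T -> nat) :
  \sum_(p : {ffun 'I_n -> T}) F (codom p) = \sum_(s <- all_seqs n) F s.
Proof.
rewrite -(big_map (fun p : {ffun 'I_n -> T} => codom p) predT F); apply/perm_big/uniq_perm.
- rewrite map_inj_uniq ?index_enum_uniq // => p q pq.
  by apply/ffunP => i; rewrite -(nth_codom_ord x0 p) pq nth_codom_ord.
- exact: uniq_all_seqs.
move=> s; rewrite mem_all_seqs; apply/mapP/eqP => [[p _ ->]|s_n].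
  by rewrite size_codom card_ord.
exists [ffun i : 'I_n => nth x0 s i]; first by rewrite mem_index_enum.
apply: (@eq_from_nth _ x0); first by rewrite size_codom card_ord.
move=> i i_lt; rewrite s_n in i_lt.
by rewrite (nth_codom_ord x0 _ (Ordinal i_lt)) ffunE.
Qed.

End AllSeqs.

Section Walks.
Variables (T : finType) (r : rel T).

Definition walk (s : seq T) := if s is x :: t then path r x t else true.

Lemma walk_cons2 x y t : walk [:: x, y & t] = r x y && walk (y :: t).
Proof. by []. Qed.

Lemma walk_rcons x s y : walk (rcons (x :: s) y) = walk (x :: s) && r (last x s) y.
Proof. exact: rcons_path. Qed.

Lemma walk_rcons2 s x y : walk (rcons (rcons s x) y) = walk (rcons s x) && r x y.
Proof. by case: s => [|z s] /=; rewrite ?andbT // rcons_path last_rcons. Qed.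

Lemma walk_cat s x t : walk (s ++ x :: t) = walk (rcons s x) && walk (x :: t).
Proof. by case: s => [|y s] //=; rewrite cat_path rcons_path andbA. Qed.

Section MaxDegree.
Variable D : nat.
Hypothesis r_sym : symmetric r.
Hypothesis deg_le : forall x, \sum_y (r x y : nat) <= D.

Lemma sum_walks_from_le m x : \sum_(t <- all_seqs T m) walk (x :: t) <= D ^ m.
Proof.
elim: m x => [|m IHm] x; first by rewrite big_all_seqs0.
rewrite big_all_seqsS expnS.
apply: (@leq_trans (\sum_y r x y * D ^ m)); last by rewrite -big_distrl leq_mul2r deg_le orbT.
apply: leq_sum => y _; rewrite (eq_bigr (fun t => r x y * walk (y :: t))).
  by rewrite -big_distrr leq_mul2l IHm orbT.
by move=> t _; rewrite walk_cons2 mulnb.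
Qed.

Lemma sum_walks_into_le m x : \sum_(t <- all_seqs T m) walk (rcons t x) <= D ^ m.
Proof.
elim: m x => [|m IHm] x; first by rewrite big_all_seqs0.
rewrite -addn1 big_all_seqsD expnD expn1.
rewrite (eq_bigr (fun t => \sum_y walk (rcons t y) * r y x)); last first.
  move=> t _; rewrite big_all_seqsS; apply: eq_bigr => y _.
  by rewrite big_all_seqs0 cats1 walk_rcons2 mulnb.
rewrite exchange_big (@leq_trans (\sum_y D ^ m * r y x)) //.
  by apply: leq_sum => y _; rewrite -big_distrl leq_mul2r IHm orbT.
rewrite -big_distrr leq_mul2l /=.
by under eq_bigr do rewrite r_sym; rewrite deg_le orbT.
Qed.

End MaxDegree.

Section MinDegree.
Variable d : nat.
Hypothesis deg_ge : forall x, d <= \sum_y (r x y : nat).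

Lemma sum_nbrs_notin_ge x (V : seq T) :
  d - size V <= \sum_y (r x y && (y \notin V) : nat).
Proof.
rewrite leq_subLR (leq_trans (deg_ge x)) //.
apply: (@leq_trans (\sum_y ((y \in V) + (r x y && (y \notin V))))).
  by apply: leq_sum => y _; case: (r x y); case: (y \in V).
by rewrite big_split leq_add2r sum_bool_card cardsE card_size.
Qed.

Lemma sum_uniq_walks_ge m x U : uniq (rcons U x) ->
  (d - (size U + m)) ^ m <=
  \sum_(t <- all_seqs T m) (uniq (U ++ x :: t) && walk (x :: t) : nat).
Proof.
elim: m x U => [|m IHm] x U Ux_uniq; first by rewrite big_all_seqs0 /= cats1 Ux_uniq.
rewrite big_all_seqsS expnS.
apply: (@leq_trans (\sum_y (r x y && (y \notin rcons U x)) * (d - (size U + m.+1)) ^ m)).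
  rewrite -big_distrl leq_mul // (leq_trans _ (sum_nbrs_notin_ge x (rcons U x))) //.
  by rewrite size_rcons leq_sub2l // addnS ltnS leq_addr.
apply: leq_sum => y _.
case/boolP: (r x y && (y \notin rcons U x)) => [/andP [xy y_new]|_] //.
rewrite mul1n -addSnnS -(size_rcons U x) (leq_trans (IHm y (rcons U x) _)) //.
  by rewrite rcons_uniq y_new.
by apply: eq_leq; apply: eq_bigr => t _; rewrite cat_rcons walk_cons2 xy.
Qed.

End MinDegree.
End Walks.

Lemma leq_exp2rW m n e : m <= n -> m ^ e <= n ^ e.
Proof. by case: e => [|e] // le_mn; rewrite leq_exp2r. Qed.

Lemma ffact_le_exp n m : n ^_ m <= n ^ m.
Proof.
elim: m n => [|m IHm] n; first by rewrite ffactn0.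
by rewrite ffactnS expnS leq_mul // (leq_trans (IHm _)) // leq_exp2rW // leq_pred.
Qed.

Lemma ffact_ge_exp_sub n m : (n - m) ^ m <= n ^_ m.
Proof.
elim: m n => [|m IHm] n; first by rewrite ffactn0.
rewrite ffactnS expnS leq_mul ?leq_subr // (leq_trans _ (IHm _)) //.
by rewrite -subn1 -subnDA add1n leq_exp2rW.
Qed.

Section KovariSosTuran.
Variables (T : finType) (e : rel T) (s : nat).
Hypotheses (e_irr : irreflexive e) (e_Kss : Kss_free e s).

Definition neighbours x := [set y | e x y].

Lemma card_common_neighbours_le (X S : {set T}) : #|S| = s ->
  #|[set x in X | S \subset neighbours x]| <= s.-1.
Proof.
move=> card_S; rewrite leqNgt; apply/negP => gt_common.
have : 0 < #|[set X' : {set T} |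
           X' \subset [set x in X | S \subset neighbours x] & #|X'| == s]|.
  by rewrite cards_draws bin_gt0; move: gt_common; case: (s).
case/card_gt0P => X' /[!inE] /andP [/fintype.subsetP sub_X' /eqP card_X'].
have nbr_S x y : x \in X' -> y \in S -> e x y.
  by move=> /sub_X' /[!inE] /andP [_ /fintype.subsetP S_nbr] /S_nbr; rewrite inE.
apply: e_Kss; exists X', S; split => //.
apply/pred0P => x /=; apply/negP => /andP [x_X' x_S].
by have := nbr_S x x x_X' x_S; rewrite e_irr.
Qed.

Lemma sum_binom_deg_le (X Y : {set T}) :
  \sum_(x in X) 'C(#|Y :&: neighbours x|, s) <= s.-1 * 'C(#|Y|, s).
Proof.
pose draw (S : {set T}) := (S \subset Y) && (#|S| == s).
have binom_nbr x : 'C(#|Y :&: neighbours x|, s) =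
    \sum_S (draw S && (S \subset neighbours x) : nat).
  rewrite -cards_draws sum_bool_card; apply: eq_card => S.
  by rewrite !inE finset.subsetI /draw -!andbA; congr andb; rewrite andbC.
under eq_bigr => x _ do rewrite binom_nbr.
rewrite exchange_big -cards_draws -(@sum_bool_card _ draw) big_distrr /=.
apply: leq_sum => S _.
case/boolP: (draw S) => [/andP [_ /eqP card_S]|_]; last by rewrite big1.
rewrite muln1 (leq_trans _ (card_common_neighbours_le X card_S)) //.
rewrite -sum1_card big_mkcond [X in _ <= X]big_mkcond.
by apply: leq_sum => x _; rewrite !inE; case: (x \in X).
Qed.

Lemma card_high_deg_ffact_le (X Y : {set T}) t m : #|Y| <= m ->
  (\sum_(x in X) (t < #|Y :&: neighbours x|)) * t ^_ s <= s.-1 * m ^ s.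
Proof.
move=> card_Y.
have binom_le :
    (\sum_(x in X) (t < #|Y :&: neighbours x|)) * 'C(t, s) <= s.-1 * 'C(m, s).
  apply: leq_trans (leq_trans (sum_binom_deg_le X Y) _).
    rewrite big_distrl leq_sum // => x _; case: ltnP => //= t_lt.
    by rewrite mul1n leq_bin2l // ltnW.
  by rewrite leq_mul2l leq_bin2l ?orbT.
rewrite -bin_ffact mulnA (leq_trans (leq_mul binom_le (leqnn _))) //.
by rewrite -mulnA bin_ffact leq_mul2l ffact_le_exp orbT.
Qed.

(* With the degree threshold [t := m %/ 2q], the first summand gives
   [m <= 4 q (t - s)]; the second is [2 q] times the resulting bound
   [(4 q)^s (s - 1)] on the number of vertices of degree above [t]. *)
Definition kst_bound q := 4 * q * s.+1 + 2 * q * ((4 * q) ^ s * s.-1).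

Lemma edge_density_le q m (X Y : {set T}) : 0 < q -> kst_bound q <= m ->
  #|X| <= m -> #|Y| <= m -> q * \sum_(x in X) #|Y :&: neighbours x| <= m * m.
Proof.
move=> q_gt0 /[dup] m_ge /(leq_trans (leq_addr _ _)) m_ge4 card_X card_Y.
set t := m %/ (2 * q); set B := (4 * q) ^ s * s.-1.
set nb := \sum_(x in X) (t < #|Y :&: neighbours x| : nat).
have sum_le : \sum_(x in X) #|Y :&: neighbours x| <= m * t + m * nb.
  apply: (@leq_trans (\sum_(x in X) (t + m * (t < #|Y :&: neighbours x|)))).
    apply: leq_sum => x _; case: ltnP => [_|]; last by rewrite muln0 addn0.
    rewrite muln1 (leq_trans _ (leq_addl _ _)) // (leq_trans _ card_Y) //.
    by rewrite subset_leq_card ?subsetIl.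
  by rewrite big_split sum_nat_const -big_distrr leq_add2r leq_mul2r card_X orbT.
have t_le : t * (2 * q) <= m := leq_trunc_div m (2 * q).
have m_le : m <= 4 * q * (t - s).
  have : m < t.+1 * (2 * q) by rewrite ltn_ceil // muln_gt0.
  move: m_ge4 q_gt0; clear => m_ge4 q_gt0 lt_t.
  have : s < t by nia.
  nia.
have nb_le : nb <= B.
  have mXs_le : m ^ s <= (4 * q) ^ s * t ^_ s.
    rewrite (leq_trans (leq_exp2rW s m_le)) // expnMn leq_mul2l.
    by rewrite ffact_ge_exp_sub orbT.
  have mXs_gt0 : 0 < m ^ s by rewrite expn_gt0 (leq_trans _ m_ge4) // muln_gt0 muln_gt0 q_gt0.
  rewrite -(leq_pmul2r mXs_gt0) (leq_trans (leq_mul (leqnn nb) mXs_le)) //.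
  by rewrite mulnCA -mulnA leq_mul2l card_high_deg_ffact_le ?orbT.
rewrite (leq_trans (leq_mul (leqnn q) sum_le)) // -(leq_pmul2l (isT : 0 < 2)).
have -> : 2 * (q * (m * t + m * nb)) = m * (t * (2 * q)) + m * (2 * q * nb) by ring.
have -> : 2 * (m * m) = m * m + m * m by ring.
apply: leq_add; first exact: leq_mul.
by rewrite leq_mul // (leq_trans _ (leq_trans (leq_addl _ _) m_ge)) // leq_mul2l nb_le orbT.
Qed.

End KovariSosTuran.

Section ChordedWalks.
Variables (T : finType) (r e : rel T) (D Z : nat).
Hypotheses (r_sym : symmetric r) (r_deg_le : forall x, \sum_y (r x y : nat) <= D).
Hypothesis chords_le : forall u w, \sum_x \sum_y (r u x && r w y && e x y : nat) <= Z.

Definition chorded_walks_from p x :=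
  \sum_u \sum_(m <- all_seqs T p) \sum_y
    r x u * (walk r (u :: m) * (r (last u m) y * e x y)).

Lemma sum_chorded_walks_from_le p : \sum_x chorded_walks_from p x <= #|T| * D ^ p * Z.
Proof.
rewrite /chorded_walks_from exchange_big -mulnA -sum_nat_const leq_sum // => u _.
rewrite exchange_big /= (@leq_trans (\sum_(m <- all_seqs T p) walk r (u :: m) * Z)) //.
  apply: leq_sum => m _; apply: (@leq_trans (walk r (u :: m) *
    \sum_x \sum_y (r u x && r (last u m) y && e x y : nat))); last first.
    by rewrite leq_mul2l chords_le orbT.
  rewrite big_distrr leq_sum // => x _; rewrite big_distrr leq_sum // => y _ /=.
  rewrite r_sym; case: (r u x); case: (path r u m) => //.
  by case: (r (last u m) y); case: (e x y).
by rewrite -big_distrl leq_mul2r (sum_walks_from_le r_deg_le) orbT.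
Qed.

Lemma walk_chordE x0 a x u m y c :
  (walk r (a ++ [:: x, u & m ++ y :: c]) &&
   e (nth x0 (a ++ [:: x, u & m ++ y :: c]) (size a))
     (nth x0 (a ++ [:: x, u & m ++ y :: c]) (size a + (size m).+2)) : nat) =
  walk r (rcons a x) * (r x u * (walk r (u :: m) * (r (last u m) y * e x y))) *
  walk r (y :: c).
Proof.
rewrite nth_cat ltnn subnn nth_cat ltnNge leq_addr addKn /= nth_cat ltnn subnn.
rewrite walk_cat walk_cons2 (walk_cat r (u :: m)) walk_rcons /=.
by case: (walk r (rcons a x)); case: (r x u); case: (path r u m);
  case: (r (last u m) y); case: (path r y c); case: (e x y).
Qed.

Lemma sum_chorded_walks_le x0 k i j : i.+2 <= j -> j <= k ->
  \sum_(s <- all_seqs T k.+1) (walk r s && e (nth x0 s i) (nth x0 s j) : nat)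
    <= #|T| * D ^ (k - 2) * Z.
Proof.
move=> ij jk; set p := j - i - 2; set q := k - j.
have -> : k.+1 = i + (p + q.+1).+2 by lia.
have -> : j = i + p.+2 by lia.
apply: (@leq_trans (\sum_(a <- all_seqs T i) \sum_x
                      walk r (rcons a x) * (chorded_walks_from p x * D ^ q))).
  rewrite big_all_seqsD big_seq [X in _ <= X]big_seq leq_sum // => a.
  rewrite mem_all_seqs => /eqP <-; rewrite big_all_seqsS leq_sum // => x _.
  rewrite big_all_seqsS /chorded_walks_from big_distrl big_distrr leq_sum // => u _.
  rewrite big_all_seqsD big_distrl big_distrr big_seq [X in _ <= X]big_seq leq_sum // => m.
  rewrite mem_all_seqs => /eqP <-.
  rewrite big_all_seqsS big_distrl big_distrr leq_sum // => y _.
  under eq_bigr do rewrite walk_chordE.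
  rewrite -big_distrr /= -mulnA !leq_mul //.
  exact: sum_walks_from_le.
rewrite exchange_big (@leq_trans (\sum_x D ^ i * (chorded_walks_from p x * D ^ q))) //.
  apply: leq_sum => x _.
  by rewrite -big_distrl leq_mul2r (sum_walks_into_le r_sym r_deg_le) orbT.
rewrite -big_distrr -big_distrl.
rewrite (leq_trans (leq_mul (leqnn _) (leq_mul (sum_chorded_walks_from_le p) (leqnn _)))) //.
have -> : k - 2 = i + p + q by lia.
by rewrite !expnD eq_leq //; ring.
Qed.

End ChordedWalks.

Lemma walk_codomE (T : finType) (r : rel T) n (p : {ffun 'I_n.+1 -> T}) :
  walk r (codom p) = [forall i : 'I_n, r (p (inord i)) (p (inord i.+1))].
Proof.
have x0 := p ord0; have := size_codom p; rewrite card_ord.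
have pE (i : nat) : i < n.+1 -> p (inord i) = nth x0 (codom p) i.
  by move=> lt_i; rewrite -(nth_codom_ord x0 p (inord i)) inordK.
case: (codom p) pE => [//|x t] pE /= [size_t].
apply/(pathP x0)/forallP => [walk_p i | adj i lt_i].
  by rewrite (pE i (ltnW (ltn_ord i))) (pE i.+1 (ltn_ord i)) walk_p // size_t.
rewrite size_t in lt_i; have := adj (Ordinal lt_i).
by rewrite (pE i (ltnW lt_i)) (pE i.+1 lt_i).
Qed.

Section AlternatingPaths.
Variables (T : finType) (e : rel T) (A : {set T}) (k : nat).
Hypotheses (e_sym : symmetric e) (e_irr : irreflexive e).

Let deg x := \sum_y (crossing e A x y : nat).

Lemma alt_pathE (p : {ffun 'I_k.+1 -> T}) :
  alt_path e A p = uniq (codom p) && walk (crossing e A) (codom p).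
Proof. by rewrite /alt_path walk_codomE. Qed.

Lemma card_alt_paths_ge d : (forall x, d <= deg x) ->
  #|T| * (d - k) ^ k <= #|alt_paths e A k|.
Proof.
move=> deg_ge; case: (posnP #|T|) => [-> //|/card_gt0P [x0 _]].
rewrite -sum_bool_card; under eq_bigr do rewrite alt_pathE.
rewrite (sum_ffun_codom x0 k.+1 (fun s => uniq s && walk _ s)) big_all_seqsS.
rewrite -sum_nat_const leq_sum // => x _.
exact: (@sum_uniq_walks_ge _ _ _ deg_ge k x [::] isT).
Qed.

Definition nonind_alt_paths :=
  [set p : {ffun 'I_k.+1 -> T} | alt_path e A p && ~~ induced_path e p].

Lemma card_alt_paths_split :
  #|alt_paths e A k| = #|induced_alt_paths e A k| + #|nonind_alt_paths|.
Proof.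
rewrite -(cardsID [set p | induced_path e p] (alt_paths e A k)).
by congr (_ + _); apply: eq_card => p; rewrite !inE // andbC.
Qed.

Lemma nonind_alt_path_chord (p : {ffun 'I_k.+1 -> T}) : p \in nonind_alt_paths ->
  exists i j : 'I_k.+1, (i.+2 <= j) && e (p i) (p j).
Proof.
rewrite inE => /andP [_ /forallPn [i /forallPn [j]]].
rewrite negb_imply negb_or => /andP [e_ij /andP [ne_ij ne_ji]].
case: (ltngtP i j) => [lt_ij | lt_ji | eq_ij].
- by exists i, j; rewrite e_ij andbT ltn_neqAle ne_ij.
- by exists j, i; rewrite e_sym e_ij andbT ltn_neqAle ne_ji.
- by move: e_ij; rewrite (val_inj eq_ij) e_irr.
Qed.

Lemma card_nonind_alt_paths_le D Z :
  (forall x, deg x <= D) ->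
  (forall u w, \sum_x \sum_y (crossing e A u x && crossing e A w y && e x y : nat) <= Z) ->
  #|nonind_alt_paths| <= k.+1 * (k.+1 * (#|T| * D ^ (k - 2) * Z)).
Proof.
move=> deg_le chords_le.
case: (set_0Vmem nonind_alt_paths) => [->|[p0 _]]; first by rewrite cards0.
have x0 := p0 ord0.
have cross_sym : symmetric (crossing e A) by move=> x y; rewrite /crossing e_sym eq_sym.
pose chorded (i j : 'I_k.+1) (p : {ffun 'I_k.+1 -> T}) :=
  (i.+2 <= j) && walk (crossing e A) (codom p) && e (p i) (p j).
apply: (@leq_trans (\sum_p \sum_i \sum_j (chorded i j p : nat))).
  rewrite -sum1_card big_mkcond leq_sum // => p _.
  case: ifP => // /[dup] /nonind_alt_path_chord [i [j chord]].
  rewrite inE alt_pathE => /andP [/andP [_ walk_p] _].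
  rewrite (bigD1 i) // (leq_trans _ (leq_addr _ _)) // (bigD1 j) //=.
  by rewrite /chorded walk_p andbT chord.
rewrite exchange_big.
apply: (@leq_trans (\sum_(i < k.+1) \sum_(j < k.+1) (#|T| * D ^ (k - 2) * Z)));
  last by rewrite !sum_nat_const !card_ord.
apply: leq_sum => i _; rewrite exchange_big; apply: leq_sum => j _.
rewrite /chorded; case: (leqP i.+2 j) => [ij | _]; last by rewrite big1.
under eq_bigr => p _ do rewrite andTb -!(nth_codom_ord x0 p).
rewrite (sum_ffun_codom x0 k.+1 (fun s => walk _ s && e (nth x0 s i) (nth x0 s j))).
exact: (sum_chorded_walks_le cross_sym deg_le chords_le x0 ij (ltn_ord j)).
Qed.

End AlternatingPaths.

Lemma card_nonind_le_card_alt_paths (T : finType) (e : rel T) (A : {set T}) k s Q K1 :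
  2 <= k -> symmetric e -> irreflexive e -> Kss_free e s -> 0 < Q ->
  (forall u v, deg1 e A u <= K1 * deg1 e A v) ->
  (forall v, kst_bound s Q + 2 * k <= deg1 e A v) ->
  Q * #|nonind_alt_paths e A k| <= k.+1 * k.+1 * (2 * K1) ^ k * #|alt_paths e A k|.
Proof.
move=> k_ge2 e_sym e_irr e_Kss Q_gt0 deg_reg deg_ge.
case: (set_0Vmem (nonind_alt_paths e A k)) => [->|[p _]]; first by rewrite cards0 muln0.
have [v _ v_min] := arg_minnP (deg1 e A) (isT : predT (p ord0)).
set d := deg1 e A v; set D := K1 * d.
have deg_le x : \sum_y (crossing e A x y : nat) <= D by rewrite sum_bool_card deg_reg.
have deg_ge' x : d <= \sum_y (crossing e A x y : nat) by rewrite sum_bool_card v_min.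
have D_ge : kst_bound s Q <= D.
  by rewrite (leq_trans (leq_trans (leq_addr _ _) (deg_ge v))) // deg_reg.
have chords_le u w :
    \sum_x \sum_y (crossing e A u x && crossing e A w y && e x y : nat) <= D * D %/ Q.
  rewrite leq_divRL // mulnC.
  have card_le x : #|[set y | crossing e A x y]| <= D by rewrite -sum_bool_card.
  apply: leq_trans (edge_density_le e_irr e_Kss Q_gt0 D_ge (card_le u) (card_le w)).
  rewrite leq_mul2l [X in _ <= X]big_mkcond /=; apply/orP; right.
  apply: eq_leq; apply: eq_bigr => x _.
  rewrite inE; case: (crossing e A u x); last by rewrite big1.
  by rewrite sum_bool_card; apply: eq_card => y; rewrite !inE.
have QZ_le : Q * (D * D %/ Q) <= D * D by rewrite mulnC leq_trunc_div.
have Dk_le : D ^ k <= (2 * K1) ^ k * (d - k) ^ k.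
  rewrite -expnMn leq_exp2rW // /D (mulnC 2 K1) -mulnA leq_mul2l.
  by apply/orP; right; have := deg_ge v; rewrite -/d; lia.
have nonind_le := card_nonind_alt_paths_le k e_sym e_irr deg_le chords_le.
rewrite (leq_trans (leq_mul (leqnn Q) nonind_le)) //.
apply: (@leq_trans (k.+1 * k.+1 * #|T| * D ^ k)).
  have -> : D ^ k = D ^ (k - 2) * (D * D) by rewrite mulnn -expnD; congr (_ ^ _); lia.
  have -> : Q * (k.+1 * (k.+1 * (#|T| * D ^ (k - 2) * (D * D %/ Q)))) =
            k.+1 * k.+1 * #|T| * D ^ (k - 2) * (Q * (D * D %/ Q)) by ring.
  by rewrite [X in _ <= X]mulnA leq_mul2l QZ_le orbT.
rewrite (leq_trans _ (leq_mul (leqnn _) (card_alt_paths_ge k deg_ge'))) //.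
have -> : k.+1 * k.+1 * (2 * K1) ^ k * (#|T| * (d - k) ^ k) =
          k.+1 * k.+1 * #|T| * ((2 * K1) ^ k * (d - k) ^ k) by ring.
by rewrite leq_mul2l Dk_le orbT.
Qed.

Lemma cross_edges_le_sum_deg1 (T : finType) (e : rel T) (A : {set T}) :
  cross_edges e A <= \sum_x deg1 e A x.
Proof.
rewrite (eq_bigr _ (fun x _ => esym (sum_bool_card (crossing e A x)))) pair_bigA /=.
rewrite sum_bool_card subset_leq_card //; apply/fintype.subsetP => -[x y].
by rewrite !inE /crossing /= => /andP [/andP [-> ->] /negPf ->].
Qed.

Local Open Scope ring_scope.

Lemma exists_nat_ge (R : archiDomainType) (x : R) : exists n : nat, x <= n%:R.
Proof.
exists (Num.Def.archi_bound `|x|).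
by rewrite (le_trans (ler_norm x)) // ltW // archi_boundP.
Qed.

Section AlmostRegular.
Variables (R : numFieldType) (T : finType) (e : rel T) (A : {set T}) (K : R).
Hypothesis regK : almost_regular e A K.

Lemma almost_regular_deg1_le (K1 : nat) : K <= K1%:R ->
  forall u v, (deg1 e A u <= K1 * deg1 e A v)%N.
Proof.
move=> K_le u v; rewrite -(ler_nat R) natrM (le_trans (regK u v)) //.
by rewrite ler_wpM2r.
Qed.

Lemma deg1_ge_of_cross_edges (d : nat) : 0 < K ->
  K * d%:R * #|T|%:R <= (cross_edges e A)%:R -> forall v, (d <= deg1 e A v)%N.
Proof.
move=> K_gt0 cross_ge v.
have n_gt0 : 0 < #|T|%:R :> R by rewrite ltr0n; apply/card_gt0P; exists v.
rewrite -(ler_nat R) -(ler_pM2l K_gt0) -(ler_pM2r n_gt0) (le_trans cross_ge) //.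
apply: (@le_trans _ _ (\sum_x deg1 e A x)%:R).
  by rewrite ler_nat cross_edges_le_sum_deg1.
rewrite natr_sum (le_trans (ler_sum _ (fun x _ => regK x v))) //.
by rewrite sumr_const [X in _ <= X]mulr_natr.
Qed.

End AlmostRegular.

Unset Implicit Arguments.

Theorem lemma4p7 (R : realType) (k s : nat) (K eps : R) :
  (2 <= k)%N -> (2 <= s)%N -> 0 < K -> 0 < eps ->
  exists C : R, 0 < C /\
    forall (T : finType) (e : rel T) (A : {set T}),
      symmetric e -> irreflexive e ->
      Kss_free e s ->
      C * (#|T|%:R) `^ (1 + k%:R^-1) <= (cross_edges e A)%:R ->
      almost_regular e A K ->
      (1 - eps) * (#|alt_paths e A k|)%:R <= (#|induced_alt_paths e A k|)%:R.
Proof.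
(* The count works for every [s]. *)
move=> k_ge2 _ K_gt0 eps_gt0.
have [K1 K_le] := exists_nat_ge K.
set c := (k.+1 * k.+1 * (2 * K1) ^ k)%N.
have [Q cQ_le] := exists_nat_ge (c%:R / eps).
set d := (kst_bound s Q.+1 + 2 * k)%N.
exists (K * d%:R); split; first by rewrite mulr_gt0 // ltr0n addn_gt0 !muln_gt0.
move=> T e A e_sym e_irr e_Kss cross_ge regK.
have deg_ge v : (d <= deg1 e A v)%N.
  apply: (deg1_ge_of_cross_edges regK K_gt0 (le_trans _ cross_ge)).
  have n_ge1 : 1 <= #|T|%:R :> R by rewrite ler1n; apply/card_gt0P; exists v.
  by rewrite ler_pM2l ?mulr_gt0 ?ltr0n // le1r_powR // lerDl invr_ge0.
have := card_nonind_le_card_alt_paths k_ge2 e_sym e_irr e_Kss (ltn0Sn Q)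
  (almost_regular_deg1_le regK K_le) deg_ge.
rewrite -(ler_nat R) natrM [X in _ <= X]natrM -/c => Qbad_le.
have bad_le : #|nonind_alt_paths e A k|%:R <= eps * #|alt_paths e A k|%:R.
  rewrite -(ler_pM2l (ltr0Sn R Q)) (le_trans Qbad_le) // mulrA (mulrC _ eps).
  by rewrite ler_wpM2r // mulrC -ler_pdivrMr // (le_trans cQ_le) // ler_nat.
move: bad_le; rewrite card_alt_paths_split natrD; lra.
Qed.
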